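(* Let $f:[0,1]\to\mathbb{R}$ with $f(0),f(1)\in\mathbb{Z}$, and let $n\in\mathbb{N}_+$, $n\ge 3$. Set, for $x\in[0,1]$, \[ \Phi_n(x):=(n+1)\int_0^1 \left(t^2+(1-t)^2\right)\frac{(nx-3)t^2(1-t)^{n-2}-(nx-2)t^3(1-t)^{n-3}+t^{nx}(1-t)^{n(1-x)}}{(1-2t)^2}\,dt. \] (a) If $f(x)-\Phi_n(x)$ is convex on $[0,1]$, then $\widetilde{B}_n(f)$ and $\widehat{B}_n(f)$ are convex on $[0,1]$. (b) If $f(x)+\Phi_n(x)$ is concave on $[0,1]$, then $\widetilde{B}_n(f)$ and $\widehat{B}_n(f)$ are concave on $[0,1]$.
   Context: For $n\in\mathbb{N}_+$ and $f:[0,1]\to\mathbb{R}$, define $\widetilde{B}_n(f)(x):=\sum_{k=0}^n \left[f\left(\frac{k}{n}\right)\binom{n}{k}\right]x^k(1-x)^{n-k}$, where $[\alpha]$ is the largest integer $\le\alpha$, and $\widehat{B}_n(f)(x):=\sum_{k=0}^n \left\langle f\left(\frac{k}{n}\right)\binom{n}{k}\right\rangle x^k(1-x)^{n-k}$, where $\langle\alpha\rangle$ is the integer nearest to $\alpha$ (when $\alpha$ is a half-integer, $\langle\alpha\rangle$ may be either neighbouring integer, chosen arbitrarily; the result holds for any such choice). *)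

From HB Require Import structures.
From mathcomp Require Import all_boot all_order all_algebra.
From mathcomp Require Import all_classical all_reals all_analysis.
Set Implicit Arguments. Unset Strict Implicit. Unset Printing Implicit Defensive.
Import Order.TTheory GRing.Theory Num.Theory.
Local Open Scope classical_set_scope.
Local Open Scope ring_scope.

Definition convex01 (R : realType) (g : R -> R) : Prop :=
  forall x y l : R, 0 <= x <= 1 -> 0 <= y <= 1 -> 0 <= l <= 1 ->
    g (l * x + (1 - l) * y) <= l * g x + (1 - l) * g y.
Definition concave01 (R : realType) (g : R -> R) : Prop :=
  forall x y l : R, 0 <= x <= 1 -> 0 <= y <= 1 -> 0 <= l <= 1 ->
    l * g x + (1 - l) * g y <= g (l * x + (1 - l) * y).

Definition bern_int (R : realType) (n : nat) (a : nat -> int) (x : R) : R :=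
  \sum_(k < n.+1) (a k)%:~R * x ^+ k * (1 - x) ^+ (n - k).

Definition bcoef (R : realType) (f : R -> R) (n k : nat) : R :=
  f (k%:R / n%:R) * ('C(n, k))%:R.

Definition Btilde (R : realType) (f : R -> R) (n : nat) (x : R) : R :=
  bern_int n (fun k => Num.floor (bcoef f n k)) x.

(* a is an admissible nearest-integer rounding of the coefficients
   (either neighbour allowed at half-integers) *)
Definition nearest_coefs (R : realType) (f : R -> R) (n : nat) (a : nat -> int) : Prop :=
  forall k : nat, (k <= n)%N -> `| bcoef f n k - (a k)%:~R | <= 2^-1.

Definition Phi_integrand (R : realType) (n : nat) (x t : R) : R :=
  (t ^+ 2 + (1 - t) ^+ 2) *
  (((n%:R * x - 3) * t ^+ 2 * (1 - t) ^+ (n - 2)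
    - (n%:R * x - 2) * t ^+ 3 * (1 - t) ^+ (n - 3)
    + t `^ (n%:R * x) * (1 - t) `^ (n%:R * (1 - x)))
   / (1 - 2 * t) ^+ 2).

Definition Phi (R : realType) (n : nat) (x : R) : R :=
  n.+1%:R * Rintegral (@lebesgue_measure R) `[0, 1] (Phi_integrand n x).

From HB Require Import structures.
From mathcomp Require Import all_boot all_order all_algebra.
From mathcomp Require Import all_classical all_reals all_analysis.
From mathcomp Require Import ring lra zify.
Import Order.TTheory GRing.Theory Num.Theory.
Local Open Scope ring_scope.

Set Implicit Arguments. Unset Strict Implicit. Unset Printing Implicit Defensive.

(* A Bernstein polynomial \sum_k b_k C(n,k) x^k (1-x)^(n-k) is convex on [0,1]
   as soon as the second differences of (b_k) are nonnegative: its second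
   derivative is n(n-1) times the Bernstein polynomial of these differences.
   For the rounded polynomials, b_k = f(k/n) - e_k / C(n,k) with rounding errors
   e_k in an interval [c, c+1], -1 <= c <= 0 (c = 0 for the floor, c = -1/2 for
   the nearest integer).  Since k |-> 1/C(n,k) is convex, the second difference
   of e_k / C(n,k) is at most 1/C(n,k) + 1/C(n,k+2) in absolute value.
   Both facts come from (n+1) \int_0^1 t^k (1-t)^(n-k) dt = 1/C(n,k): the second
   difference of t^k (1-t)^(n-k) in k is t^k (1-t)^(n-k-2) (1-2t)^2, and that of
   the integrand of Phi_n at the nodes x = k/n is t^k (1-t)^(n-k) +
   t^(k+2) (1-t)^(n-k-2).  Hence Phi_n has second difference exactly
   1/C(n,k) + 1/C(n,k+2) at the nodes, which is what convexity of f - Phi_n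
   needs to absorb the rounding errors. *)

Section SecondDifference.
Variable R : realFieldType.

Definition delta2 (b : nat -> R) (k : nat) : R := b k - 2 * b k.+1 + b k.+2.

Lemma eq_delta2 (b c : nat -> R) k :
  (forall j, (k <= j <= k.+2)%N -> b j = c j) -> delta2 b k = delta2 c k.
Proof. by move=> bc; rewrite /delta2 !bc //; lia. Qed.

Lemma delta2D (b c : nat -> R) k :
  delta2 (fun j => b j + c j) k = delta2 b k + delta2 c k.
Proof. by rewrite /delta2; ring. Qed.

Lemma delta2B (b c : nat -> R) k :
  delta2 (fun j => b j - c j) k = delta2 b k - delta2 c k.
Proof. by rewrite /delta2; ring. Qed.

Lemma delta2Zl (c : R) (b : nat -> R) k : delta2 (fun j => c * b j) k = c * delta2 b k.
Proof. by rewrite /delta2; ring. Qed.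

Lemma norm_delta2_scaled_le (c : R) (e w : nat -> R) k :
  -1 <= c <= 0 -> (forall j, (k <= j <= k.+2)%N -> c <= e j <= c + 1) ->
  (forall j, 0 <= w j) -> 0 <= delta2 w k ->
  `|delta2 (fun j => e j * w j) k| <= w k + w k.+2.
Proof.
move=> /andP[c_ge c_le] e_bd w_ge0 w_cvx.
have bd j : (k <= j <= k.+2)%N -> c * w j <= e j * w j <= (c + 1) * w j.
  by move=> /e_bd /andP[lo hi]; rewrite !ler_wpM2r.
have /andP[? ?] := bd k ltac:(lia).
have /andP[? ?] := bd k.+1 ltac:(lia).
have /andP[? ?] := bd k.+2 ltac:(lia).
have c1_ge0 : 0 <= c + 1 by lra.
have := mulr_le0_ge0 c_le w_cvx; have := mulr_ge0 c1_ge0 w_cvx.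
rewrite /delta2 ler_norml => *; apply/andP; split; lra.
Qed.

End SecondDifference.

Section ConvexityOnUnitInterval.
Variable R : realType.

Lemma convex01N (g : R -> R) : convex01 (fun x => - g x) <-> concave01 g.
Proof. by split=> cvx x y l hx hy hl; have := cvx x y l hx hy hl; lra. Qed.

Lemma convex01_horner (p : {poly R}) :
  (forall x, 0 < x < 1 -> 0 <= p^`()^`().[x]) -> convex01 (horner p).
Proof.
have D1_horner (q : {poly R}) : 'D_1 (horner q) = horner q^`().
  by apply/funext => z; rewrite derivE derive1E.
have D1_hornerE (q : {poly R}) z : 'D_1 (horner q) z = q^`().[z].
  by rewrite -derive1E -derivE.
move=> p''_ge0 x y l /andP[x_ge0 x_le1] /andP[y_ge0 y_le1] /andP[l_ge0 l_le1].
wlog xy : x y l x_ge0 x_le1 y_ge0 y_le1 l_ge0 l_le1 / x <= y.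
  move=> convex_xy; have [|/ltW yx] := leP x y; first exact: convex_xy.
  have := convex_xy y x (1 - l) y_ge0 y_le1 x_ge0 x_le1.
  by rewrite subKr (addrC (l * x)) (addrC (l * p.[x])); apply; lra.
have := second_derivative_convex _ _ _ _ _ (Itv01 l_ge0 l_le1) xy.
rewrite !convRE /=; apply.
- move=> z /andP[xz zy]; rewrite D1_horner D1_hornerE.
  by apply: p''_ge0; apply/andP; split; lra.
- exact/cvg_at_left_filter/continuous_horner.
- exact/cvg_at_right_filter/continuous_horner.
- by move=> z _; exact: derivable_horner.
- by move=> z _; rewrite D1_horner; exact: derivable_horner.
Qed.

Lemma convex01_delta2_nodes (g : R -> R) n k : convex01 g -> (k.+2 <= n)%N ->
  0 <= delta2 (fun j => g (j%:R / n%:R)) k.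
Proof.
move=> cvx kn; have n_gt0 : 0 < n%:R :> R by rewrite ltr0n; lia.
have node01 j : (j <= n)%N -> 0 <= (j%:R / n%:R : R) <= 1.
  by move=> jn; rewrite divr_ge0 ?ler0n //= ler_pdivrMr // mul1r ler_nat.
have half01 : 0 <= (2^-1 : R) <= 1 by apply/andP; split; lra.
have := cvx _ _ _ (node01 k ltac:(lia)) (node01 k.+2 kn) half01.
have -> : 2^-1 * (k%:R / n%:R) + (1 - 2^-1) * (k.+2%:R / n%:R) = k.+1%:R / n%:R :> R.
  by rewrite -[k.+2]addn2 -[k.+1]addn1 !natrD; field; rewrite gt_eqF.
by rewrite /delta2; lra.
Qed.

Lemma concave01_delta2_nodes (g : R -> R) n k : concave01 g -> (k.+2 <= n)%N ->
  delta2 (fun j => g (j%:R / n%:R)) k <= 0.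
Proof.
by move=> /convex01N /convex01_delta2_nodes cvx /cvx; rewrite /delta2; lra.
Qed.

End ConvexityOnUnitInterval.

Section BernsteinPolynomial.
Variable R : realType.

Definition bernstein_poly (n : nat) (b : nat -> R) : {poly R} :=
  \sum_(k < n.+1) (b k * 'C(n, k)%:R) *: ('X^k * (1 - 'X) ^+ (n - k)).

Lemma horner_bernstein_poly n b x :
  (bernstein_poly n b).[x] =
  \sum_(k < n.+1) b k * 'C(n, k)%:R * x ^+ k * (1 - x) ^+ (n - k).
Proof.
rewrite horner_sum; apply: eq_bigr => k _.
by rewrite hornerZ hornerM hornerXn horner_exp !hornerE.
Qed.

Lemma bernstein_poly_ge0 n b x : 0 <= x <= 1 ->
  (forall k, (k <= n)%N -> 0 <= b k) -> 0 <= (bernstein_poly n b).[x].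
Proof.
move=> /andP[x_ge0 x_le1] b_ge0; rewrite horner_bernstein_poly.
apply: sumr_ge0 => k _.
by rewrite !mulr_ge0 ?exprn_ge0 ?subr_ge0 ?ler0n ?b_ge0 // -ltnS.
Qed.

Lemma deriv_bernstein_poly0 b : (bernstein_poly 0 b)^`() = 0.
Proof. by rewrite /bernstein_poly big_ord1 !expr0 !mulr1 derivZ -polyC1 derivC scaler0. Qed.

Lemma deriv_onemX m : ((1 - 'X : {poly R}) ^+ m)^`() = - ((1 - 'X) ^+ m.-1 *+ m).
Proof.
by rewrite deriv_exp derivB derivX -[1]/(1%:P) derivC sub0r mulN1r mulNrn.
Qed.

Lemma deriv_bernstein_poly n b :
  (bernstein_poly n.+1 b)^`() = n.+1%:R *: bernstein_poly n (fun k => b k.+1 - b k).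
Proof.
rewrite /bernstein_poly (big_morph _ (@derivD _) (@deriv0 _)).
rewrite (eq_bigr (fun k : 'I_n.+2 =>
    (b k * 'C(n.+1, k)%:R * k%:R) *: ('X^(k.-1) * (1 - 'X) ^+ (n.+1 - k))
  - (b k * 'C(n.+1, k)%:R * (n.+1 - k)%:R) *: ('X^k * (1 - 'X) ^+ (n - k)))); last first.
  move=> k _; rewrite derivZ derivM derivXn deriv_onemX.
  have -> : (n.+1 - k).-1 = (n - k)%N by rewrite -subn1 subnAC subn1.
  by rewrite -!mul_polyC !polyCM !polyC_natr; ring.
rewrite sumrB [X in X - _]big_ord_recl [X in _ - X]big_ord_recr /=.
rewrite !subnn !mulr0 !scale0r add0r addr0 scaler_sumr -sumrB.
apply: eq_bigr => k _; rewrite /bump /= add1n subSS add0n.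
have diag : 'C(n.+1, k.+1)%:R * k.+1%:R = n.+1%:R * 'C(n, k)%:R :> R.
  by rewrite -!natrM mul_bin_diag mulnC.
have down : 'C(n.+1, k)%:R * (n.+1 - k)%:R = n.+1%:R * 'C(n, k)%:R :> R.
  by rewrite -!natrM mul_bin_down mulnC.
by rewrite -!mulrA diag down scalerA -scalerBl; congr (_ *: _); ring.
Qed.

Lemma bernstein_poly_convex n b :
  (forall k, (k.+2 <= n)%N -> 0 <= delta2 b k) -> convex01 (horner (bernstein_poly n b)).
Proof.
move=> delta2_ge0; apply: convex01_horner => x /andP[x_gt0 x_lt1].
case: n delta2_ge0 => [|[|n]] delta2_ge0.
- by rewrite deriv_bernstein_poly0 deriv0 horner0.
- by rewrite deriv_bernstein_poly derivZ deriv_bernstein_poly0 scaler0 horner0.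
rewrite deriv_bernstein_poly derivZ deriv_bernstein_poly !hornerZ !mulr_ge0 ?ler0n //.
apply: bernstein_poly_ge0 => [|k k_le]; first by rewrite !ltW.
by have := delta2_ge0 k; rewrite /delta2 => /(_ ltac:(lia)); lra.
Qed.

Lemma bernstein_polyN n (b : nat -> R) :
  bernstein_poly n (fun k => - b k) = - bernstein_poly n b.
Proof. by rewrite /bernstein_poly -sumrN; apply: eq_bigr => k _; rewrite mulNr scaleNr. Qed.

Lemma bernstein_poly_concave n (b : nat -> R) :
  (forall k, (k.+2 <= n)%N -> delta2 b k <= 0) -> concave01 (horner (bernstein_poly n b)).
Proof.
move=> delta2_le0; apply/convex01N.
have -> : (fun x => - (bernstein_poly n b).[x]) = horner (bernstein_poly n (fun k => - b k)).
  by apply/funext => x; rewrite bernstein_polyN hornerN.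
by apply: bernstein_poly_convex => k /delta2_le0; rewrite /delta2; lra.
Qed.

Lemma bern_intE n (a : nat -> int) :
  bern_int n a = horner (bernstein_poly n (fun k => (a k)%:~R / 'C(n, k)%:R : R)).
Proof.
apply/funext => x; rewrite horner_bernstein_poly; apply: eq_bigr => k _.
by rewrite divfK // pnatr_eq0 -lt0n bin_gt0 -ltnS.
Qed.

End BernsteinPolynomial.

Section IntegralSecondDifference.
Variables (d : measure_display) (T : measurableType d) (R : realType).
Variables (mu : {measure set T -> \bar R}) (D : set T).
Hypothesis mD : measurable D.

Lemma Rintegral_delta2 (h : nat -> T -> R) k :
  (forall j, (k <= j <= k.+2)%N -> mu.-integrable D (EFin \o h j)) ->
  Rintegral mu D (fun t => delta2 (h ^~ t) k) = delta2 (fun j => Rintegral mu D (h j)) k.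
Proof.
move=> h_int; have int0 := h_int k ltac:(lia).
have int1 := h_int k.+1 ltac:(lia); have int2 := h_int k.+2 ltac:(lia).
have int1' : mu.-integrable D (EFin \o (fun t => 2 * h k.+1 t)).
  by apply: eq_integrable mD _ _ _ (integrableZl mD 2 int1) => t _ /=; rewrite EFinM.
have int01 : mu.-integrable D (EFin \o (fun t => h k t - 2 * h k.+1 t)).
  by apply: eq_integrable mD _ _ _ (integrableB mD int0 int1') => t _ /=; rewrite EFinB.
by rewrite /delta2 RintegralD // RintegralB // RintegralZl.
Qed.

Lemma integrable_delta2 (h : nat -> T -> R) (s : T -> R) k :
  {in D, forall t, delta2 (h ^~ t) k = s t} ->
  mu.-integrable D (EFin \o s) -> mu.-integrable D (EFin \o h k.+1) ->
  mu.-integrable D (EFin \o h k) <-> mu.-integrable D (EFin \o h k.+2).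
Proof.
move=> hs s_int h1_int.
have solve (u w : T -> R) : mu.-integrable D (EFin \o u) ->
    {in D, forall t, w t = s t - u t + 2 * h k.+1 t} -> mu.-integrable D (EFin \o w).
  move=> u_int wE; apply: eq_integrable mD _ _ _
    (integrableD mD (integrableB mD s_int u_int) (integrableZl mD 2 h1_int)).
  by move=> t tD /=; rewrite wE // EFinD EFinB EFinM.
by split=> u_int; apply: (solve _ _ u_int) => t tD; rewrite -hs // /delta2 /=; ring.
Qed.

End IntegralSecondDifference.

Section BetaIntegral.
Variable R : realType.
Local Notation mu := (@lebesgue_measure R).

Lemma Rintegral_XMonemX_binomial n k : (k <= n)%N ->
  n.+1%:R * Rintegral mu `[0, 1] (XMonemX k (n - k)) = ('C(n, k)%:R)^-1.
Proof.
move=> kn; have -> : Rintegral mu `[0, 1] (XMonemX k (n - k)) = beta_fun k.+1 (n - k).+1.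
  by rewrite Rintegral_mkcond.
rewrite beta_fun_fact subnKC // factS -(bin_fact kn) !natrM.
have nz m : m`!%:R != 0 :> R by rewrite pnatr_eq0 -lt0n fact_gt0.
have C_nz : 'C(n, k)%:R != 0 :> R by rewrite pnatr_eq0 -lt0n bin_gt0.
by field; rewrite C_nz !nz addrC natr1 pnatr_eq0.
Qed.

Lemma delta2_XMonemX n k (t : R) : (k.+2 <= n)%N ->
  delta2 (fun j => XMonemX j (n - j) t) k = XMonemX k (n - k.+2) t * (1 - 2 * t) ^+ 2.
Proof.
move=> kn; rewrite /delta2 /XMonemX.
have -> : (n - k = (n - k.+2).+2)%N by lia.
have -> : (n - k.+1 = (n - k.+2).+1)%N by lia.
rewrite /unstable.onem !exprS; ring.
Qed.

Lemma inv_binomial_delta2_ge0 n k : (k.+2 <= n)%N ->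
  0 <= delta2 (fun j => ('C(n, j)%:R : R)^-1) k.
Proof.
move=> kn; rewrite (eq_delta2 (c := fun j => n.+1%:R * Rintegral mu `[0, 1] (XMonemX j (n - j)))).
  rewrite delta2Zl -Rintegral_delta2 //; last by move=> *; exact: integrable_XMonemX.
  apply/mulr_ge0/Rintegral_ge0 => // t t01; rewrite delta2_XMonemX //.
  by rewrite mulr_ge0 ?sqr_ge0 ?XMonemX_ge0 ?inE.
by move=> j jk; rewrite Rintegral_XMonemX_binomial //; lia.
Qed.

End BetaIntegral.

Section PhiAtNodes.
Variables (R : realType) (n : nat).
Hypothesis n_ge3 : (3 <= n)%N.
Local Notation mu := (@lebesgue_measure R).

(* The integrand of [Phi] takes the junk value 0 at t = 1/2 (division by 0),
   where the recurrence between consecutive nodes fails. *)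
Definition punctured01 : set R := (`[0, 1] `\ 2^-1)%classic.

Lemma measurable_punctured01 : measurable punctured01.
Proof. exact: measurableD. Qed.

Lemma punctured01P t : t \in punctured01 -> 0 <= t <= 1 /\ 1 - 2 * t != 0.
Proof.
rewrite inE => -[]; rewrite /= in_itv /= => -> t_neq; split=> //.
by apply/eqP => ?; apply: t_neq; lra.
Qed.

Definition Phi_node_integrand (j : nat) (t : R) : R :=
  (t ^+ 2 + (1 - t) ^+ 2) *
  (((j%:R - 3) * t ^+ 2 * (1 - t) ^+ (n - 2) - (j%:R - 2) * t ^+ 3 * (1 - t) ^+ (n - 3)
    + XMonemX j (n - j) t) / (1 - 2 * t) ^+ 2).

Lemma Phi_integrand_node j t : (j <= n)%N -> 0 <= t <= 1 ->
  Phi_integrand n (j%:R / n%:R) t = Phi_node_integrand j t.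
Proof.
rewrite /Phi_integrand => jn /andP[t_ge0 t_le1].
have n_neq0 : n%:R != 0 :> R by rewrite pnatr_eq0; lia.
have -> : n%:R * (j%:R / n%:R) = j%:R :> R by rewrite mulrC divfK.
have -> : n%:R * (1 - j%:R / n%:R) = (n - j)%N%:R :> R.
  by rewrite mulrBr mulr1 mulrC divfK // natrB.
by rewrite !powR_mulrn ?subr_ge0.
Qed.

Lemma Phi_node_integrand2 t : Phi_node_integrand 2 t = 0.
Proof. by rewrite /Phi_node_integrand /XMonemX /unstable.onem; ring. Qed.

Lemma Phi_node_integrand3 t : Phi_node_integrand 3 t = 0.
Proof. by rewrite /Phi_node_integrand /XMonemX /unstable.onem; ring. Qed.

Lemma delta2_Phi_node_integrand k t : (k.+2 <= n)%N -> 1 - 2 * t != 0 ->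
  delta2 (Phi_node_integrand ^~ t) k = XMonemX k (n - k) t + XMonemX k.+2 (n - k.+2) t.
Proof.
move=> kn t_neq; rewrite /delta2 /Phi_node_integrand /XMonemX /unstable.onem.
have -> : (n - k = (n - k.+2).+2)%N by lia.
have -> : (n - k.+1 = (n - k.+2).+1)%N by lia.
by rewrite !exprS; field.
Qed.

Lemma Rintegral_punctured01 (f : R -> R) : mu.-integrable punctured01 (EFin \o f) ->
  Rintegral mu punctured01 f = Rintegral mu `[0, 1] f.
Proof.
move=> f_int; rewrite /Rintegral /punctured01 integral_setD1 //.
  exact: measurable_punctured01.
exact: measurable_int f_int.
Qed.

Lemma integrable_XMonemX_punctured01 a b : mu.-integrable punctured01 (EFin \o XMonemX a b).
Proof.
apply: integrableS (integrable_XMonemX a b) => //; first exact: measurable_punctured01.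
by move=> t [].
Qed.

Lemma integrable_Phi_node_integrand j : (j <= n)%N ->
  mu.-integrable punctured01 (EFin \o Phi_node_integrand j).
Proof.
have mP := measurable_punctured01.
pose int i := mu.-integrable punctured01 (EFin \o Phi_node_integrand i).
have step k : (k.+2 <= n)%N -> int k.+1 -> int k <-> int k.+2.
  rewrite /int => kn int1; apply: (integrable_delta2 (mu := mu) mP (h := Phi_node_integrand)
    (s := fun t => XMonemX k (n - k) t + XMonemX k.+2 (n - k.+2) t) _ _ int1).
    by move=> t /punctured01P[_ t_neq]; rewrite delta2_Phi_node_integrand.
  apply: (eq_integrable (mu := mu) mP) (integrableD (mu := mu) mP
    (integrable_XMonemX_punctured01 k (n - k))
    (integrable_XMonemX_punctured01 k.+2 (n - k.+2))) => t _.
  by rewrite /= EFinD.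
have vanishing i : (forall t, Phi_node_integrand i t = 0) -> int i.
  by move=> i0; apply: (eq_integrable (mu := mu) mP) (integrable0 _ _) => t _; rewrite /= i0.
have int2 := vanishing 2 Phi_node_integrand2; have int3 := vanishing 3 Phi_node_integrand3.
have int1 : int 1 by apply/(step 1).
have up i : (i.+3 <= n)%N -> int i.+2 /\ int i.+3.
  elim: i => [|i IH] iln; first by [].
  have [int_i2 int_i3] := IH (ltnW iln).
  by split=> //; apply/(step i.+2 iln int_i3).
case: j => [|[|[|j]]] jn //; first exact/(step 0 (ltnW n_ge3) int1).
exact: (up j jn).2.
Qed.

Lemma Phi_node j : (j <= n)%N ->
  Phi n (j%:R / n%:R) = n.+1%:R * Rintegral mu punctured01 (Phi_node_integrand j).
Proof.
move=> jn; have int_j := integrable_Phi_node_integrand jn.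
have int_Phi : mu.-integrable punctured01 (EFin \o Phi_integrand n (j%:R / n%:R)).
  apply: (eq_integrable (mu := mu) measurable_punctured01) int_j => t /punctured01P[t01 _].
  by rewrite /= Phi_integrand_node.
rewrite /Phi -Rintegral_punctured01 //; congr (_ * _).
by apply: eq_Rintegral => t /punctured01P[t01 _]; exact: Phi_integrand_node.
Qed.

Lemma delta2_Phi_nodes k : (k.+2 <= n)%N ->
  delta2 (fun j => Phi n (j%:R / n%:R : R)) k = ('C(n, k)%:R)^-1 + ('C(n, k.+2)%:R)^-1.
Proof.
move=> kn; have mP := measurable_punctured01.
have XM_int := integrable_XMonemX_punctured01.
rewrite (eq_delta2 (c := fun j => n.+1%:R * Rintegral mu punctured01 (Phi_node_integrand j))).
  rewrite delta2Zl -Rintegral_delta2 //; last first.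
    by move=> j /andP[_ jk]; apply: integrable_Phi_node_integrand; lia.
  rewrite (eq_Rintegral mu (g := fun t : R => XMonemX k (n - k) t + XMonemX k.+2 (n - k.+2) t)).
    rewrite RintegralD // mulrDr !Rintegral_punctured01 //.
    by rewrite !Rintegral_XMonemX_binomial //; lia.
  by move=> t /punctured01P[_ t_neq]; rewrite delta2_Phi_node_integrand.
by move=> j /andP[_ jk]; rewrite Phi_node //; lia.
Qed.

End PhiAtNodes.

Section RoundedBernstein.
Variables (R : realType) (f : R -> R) (n : nat).
Hypothesis n_ge3 : (3 <= n)%N.

Lemma delta2_rounded_coef_near_nodes (c : R) (a : nat -> int) k :
  -1 <= c <= 0 -> (forall j, (j <= n)%N -> c <= bcoef f n j - (a j)%:~R <= c + 1) ->
  (k.+2 <= n)%N ->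
  `|delta2 (fun j => (a j)%:~R / 'C(n, j)%:R) k - delta2 (fun j => f (j%:R / n%:R)) k|
    <= delta2 (fun j => Phi n (j%:R / n%:R : R)) k.
Proof.
move=> c_bd a_bd kn; rewrite delta2_Phi_nodes //.
pose e j := bcoef f n j - (a j)%:~R.
rewrite (eq_delta2 (c := fun j => f (j%:R / n%:R) - e j * ('C(n, j)%:R)^-1)); last first.
  move=> j /andP[_ jk]; have C_neq0 : 'C(n, j)%:R != 0 :> R.
    by rewrite pnatr_eq0 -lt0n bin_gt0; lia.
  by rewrite /e /bcoef; field.
rewrite delta2B addrAC subrr add0r normrN.
apply: norm_delta2_scaled_le c_bd _ _ (inv_binomial_delta2_ge0 _ kn) => [j /andP[_ jk]|j].
  by apply: a_bd; lia.
by rewrite invr_ge0 ler0n.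
Qed.

Lemma bern_int_convex_of_rounding (c : R) (a : nat -> int) :
  -1 <= c <= 0 -> (forall j, (j <= n)%N -> c <= bcoef f n j - (a j)%:~R <= c + 1) ->
  convex01 (fun x => f x - Phi n x) -> convex01 (@bern_int R n a).
Proof.
move=> c_bd a_bd cvx; rewrite bern_intE; apply: bernstein_poly_convex => k kn.
have := convex01_delta2_nodes cvx kn; rewrite /= delta2B.
by have := delta2_rounded_coef_near_nodes c_bd a_bd kn; rewrite ler_norml; lra.
Qed.

Lemma bern_int_concave_of_rounding (c : R) (a : nat -> int) :
  -1 <= c <= 0 -> (forall j, (j <= n)%N -> c <= bcoef f n j - (a j)%:~R <= c + 1) ->
  concave01 (fun x => f x + Phi n x) -> concave01 (@bern_int R n a).
Proof.
move=> c_bd a_bd ccv; rewrite bern_intE; apply: bernstein_poly_concave => k kn.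
have := concave01_delta2_nodes ccv kn; rewrite /= delta2D.
by have := delta2_rounded_coef_near_nodes c_bd a_bd kn; rewrite ler_norml; lra.
Qed.

End RoundedBernstein.

Theorem theorem1p10 (R : realType) (f : R -> R) (n : nat) :
  f 0 \is a Num.int -> f 1 \is a Num.int -> (3 <= n)%N ->
  (convex01 (fun x => f x - Phi n x) ->
     convex01 (Btilde f n) /\
     (forall a : nat -> int, nearest_coefs f n a -> convex01 (@bern_int R n a)))
  /\
  (concave01 (fun x => f x + Phi n x) ->
     concave01 (Btilde f n) /\
     (forall a : nat -> int, nearest_coefs f n a -> concave01 (@bern_int R n a))).
Proof.
move=> _ _ n_ge3.
have floor_c : -1 <= (0 : R) <= 0 by apply/andP; split; lra.
have floor_bd j : (j <= n)%N ->
    0 <= bcoef f n j - (Num.floor (bcoef f n j))%:~R <= 0 + 1.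
  move=> _; have := floor_le (bcoef f n j); have := floorD1_gt (bcoef f n j).
  by rewrite intrD; lra.
have nearest_c : -1 <= (- 2^-1 : R) <= 0 by apply/andP; split; lra.
have nearest_bd a : nearest_coefs f n a -> forall j, (j <= n)%N ->
    - 2^-1 <= bcoef f n j - (a j)%:~R <= - 2^-1 + 1.
  by move=> a_near j /a_near; rewrite ler_norml; lra.
split=> [cvx|ccv]; split=> [|a /nearest_bd a_bd].
- exact: bern_int_convex_of_rounding floor_c floor_bd cvx.
- exact: bern_int_convex_of_rounding nearest_c a_bd cvx.
- exact: bern_int_concave_of_rounding floor_c floor_bd ccv.
- exact: bern_int_concave_of_rounding nearest_c a_bd ccv.
Qed.
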